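(* Let $\Sigma$ be a graded alphabet and $L_1,L_2$ two finite tree languages over $\Sigma$. Let $(\Sigma,Q,\nu,\delta)$ be the accessible part of the product RWTA $A_{L_1}\times A_{L_2}$ (over the semiring $(\mathbb{N},+,\times,0,1)$). Then $\mathrm{KerSeries}(L_1,L_2)=\nu(Q)=\sum_{q\in Q}\nu(q)$.
   Context: A graded alphabet is a finite set $\Sigma=\bigcup_{k\in\mathbb{N}}\Sigma_k$; $T_\Sigma$ is the set of trees $f(t_1,\ldots,t_k)$ with $f\in\Sigma_k$. A RWTA is $A=(\Sigma,Q,\nu,\delta)$ with $Q$ finite, $\nu:Q\to\mathbb{N}$, $\delta\subseteq\bigcup_k Q\times\Sigma_k\times Q^k$; $\delta(f,q_1,\ldots,q_k)=\{q\mid(q,f,q_1,\ldots,q_k)\in\delta\}$, extended to subsets by union over tuples; $\Delta(f(t_1,\ldots,t_k))=\delta(f,\Delta(t_1),\ldots,\Delta(t_k))$. The down language of a state $q$ is $L_q(A)=\{t\mid q\in\Delta(t)\}$; the accessible part of $A$ is the RWTA obtained by keeping only the states $q$ with $L_q(A)\neq\emptyset$, restricting $\nu$ and $\delta$ to them. For $A_i=(\Sigma,Q_i,\nu_i,\delta_i)$, the product $A_1\times A_2$ has states $Q_1\times Q_2$, transitions $\delta'(f,(q_{1_1},q_{2_1}),\ldots,(q_{1_k},q_{2_k}))=\delta_1(f,q_{1_1},\ldots,q_{1_k})\times\delta_2(f,q_{2_1},\ldots,q_{2_k})$, and weights $\nu'((q_1,q_2))=\nu_1(q_1)\nu_2(q_2)$.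 For $t=f(t_1,\ldots,t_k)$, $\mathrm{SubTree}(t)=\{t\}\cup\bigcup_j\mathrm{SubTree}(t_j)$; $\mathrm{SubTreeSet}(L)=\bigcup_{t\in L}\mathrm{SubTree}(t)$; $\mathrm{SubTreeSeries}_t(s)$ is the number of nodes of $t$ whose subtree equals $s$, and $\mathrm{SubTreeSeries}_L=\sum_{t\in L}\mathrm{SubTreeSeries}_t$. The sequential subtree automaton of $L$ is $A_L=(\Sigma,\mathrm{SubTreeSet}(L),\nu,\delta)$ with $\nu(t')=\mathrm{SubTreeSeries}_L(t')$ and, for $f\in\Sigma_k$, $t_{k+1}\in\delta(f,t_1,\ldots,t_k)$ iff $t_{k+1}=f(t_1,\ldots,t_k)$. The subtree series kernel is $\mathrm{KerSeries}(L_1,L_2)=\sum_{t\in T_\Sigma}\mathrm{SubTreeSeries}_{L_1}(t)\cdot\mathrm{SubTreeSeries}_{L_2}(t)$. *)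

From HB Require Import structures.
From Stdlib Require List.
From mathcomp Require Import all_boot.

Set Implicit Arguments.
Unset Strict Implicit.
Unset Printing Implicit Defensive.

(* Graded alphabet: a finite type [Sigma] of symbols with an arity map [ar];
   Sigma_k = [pred f | ar f == k]. *)

Section Trees.
Variable Sigma : eqType.

Inductive tree := Node of Sigma & seq tree.

Definition tree_ind' (P : tree -> Prop)
  (H : forall f ts, (forall t, List.In t ts -> P t) -> P (Node f ts)) :
  forall t, P t :=
  fix F t := match t with
  | Node f ts => H f ts
      ((fix G (l : seq tree) : forall u, List.In u l -> P u :=
          match l with
          | nil => fun u (Hu : List.In u nil) => False_ind _ Hu
          | cons a l' => fun u Hu =>
              match Hu with
              | or_introl e => eq_ind a P (F a) u e
              | or_intror h => G l' u h
              end
          end) ts)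
  end.

Fixpoint tree_enc (t : tree) : GenTree.tree Sigma :=
  let: Node f ts := t in GenTree.Node 0 (GenTree.Leaf f :: map tree_enc ts).

Fixpoint tree_dec (g : GenTree.tree Sigma) : option tree :=
  match g with
  | GenTree.Node _ (GenTree.Leaf f :: gs) => Some (Node f (pmap tree_dec gs))
  | _ => None
  end.

Lemma tree_encK : pcancel tree_enc tree_dec.
Proof.
elim/tree_ind' => f ts IH /=; congr (Some (Node f _)).
elim: ts IH => [|a l IHl] IH //=.
by rewrite IH /=; [rewrite IHl // => u Hu; apply: IH; right | left].
Qed.

HB.instance Definition _ := Equality.copy tree (pcan_type tree_encK).

Variable ar : Sigma -> nat.

Fixpoint wf_tree (t : tree) : bool :=
  let: Node f ts := t in (size ts == ar f) && all id (map wf_tree ts).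

(* SubTree(t), as a list (possibly with repetitions) *)
Fixpoint subtrees (t : tree) : seq tree :=
  let: Node f ts := t in t :: flatten (map subtrees ts).

(* SubTreeSet(L) for a finite language L given as a duplicate-free list *)
Definition SubTreeSet (L : seq tree) : seq tree :=
  undup (flatten (map subtrees L)).

Fixpoint SubTreeSeries_t (t s : tree) : nat :=
  let: Node f ts := t in (t == s) + sumn (map (fun u => SubTreeSeries_t u s) ts).

Definition SubTreeSeries (L : seq tree) (s : tree) : nat :=
  \sum_(t <- L) SubTreeSeries_t t s.

(* KerSeries(L1,L2) = sum_{t in T_Sigma} SubTreeSeries_L1(t) SubTreeSeries_L2(t).
   The summand vanishes outside SubTreeSet(L1) (a finite set), so the
   (finitely supported) sum is taken over that finite support. *)
Definition KerSeries (L1 L2 : seq tree) : nat :=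
  \sum_(t <- SubTreeSet L1) SubTreeSeries L1 t * SubTreeSeries L2 t.

(* Rational weighted tree automata over (N,+,x,0,1):
   a finite state set (duplicate-free list), weights nu, and the
   transition relation delta given by trans f [:: q1; ...; qk] q. *)
Record rwta (Q : eqType) := RWTA {
  states : seq Q;
  weight : Q -> nat;
  trans : Sigma -> seq Q -> Q -> bool }.

Definition wf_rwta (Q : eqType) (A : rwta Q) : Prop :=
  uniq (states A) /\
  forall f qs q, trans A f qs q ->
    [&& q \in states A, all (mem (states A)) qs & size qs == ar f].

Inductive accepts (Q : eqType) (A : rwta Q) : tree -> Q -> Prop :=
| acc_node f ts qs q :
    List.Forall2 (accepts A) ts qs -> trans A f qs q -> accepts A (Node f ts) q.

Definition accessible_state (Q : eqType) (A : rwta Q) (q : Q) : Prop :=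
  exists t, wf_tree t /\ accepts A t q.

Definition is_accessible_part (Q : eqType) (A B : rwta Q) : Prop :=
  [/\ uniq (states B),
      (forall q, q \in states B <-> (q \in states A /\ accessible_state A q)),
      (forall q, weight B q = weight A q) &
      (forall f qs q, trans B f qs q =
          [&& trans A f qs q, q \in states B & all (mem (states B)) qs])].

Definition prod_rwta (Q1 Q2 : eqType) (A1 : rwta Q1) (A2 : rwta Q2)
  : rwta (Q1 * Q2)%type :=
  RWTA [seq (a, b) | a <- states A1, b <- states A2]
       (fun q => weight A1 q.1 * weight A2 q.2)
       (fun f qs q => trans A1 f (unzip1 qs) q.1 && trans A2 f (unzip2 qs) q.2).

Definition subtree_automaton (L : seq tree) : rwta tree :=
  RWTA (SubTreeSet L) (SubTreeSeries L)
       (fun f ts t => [&& t == Node f ts, t \in SubTreeSet L,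
                          all (mem (SubTreeSet L)) ts & size ts == ar f]).

End Trees.

(* A tree t is accepted by the sequential subtree automaton A_L exactly in the
   state t itself, and only when t is a subtree of L; hence the product
   A_L1 x A_L2 accepts t only in the diagonal state (t, t), and its accessible
   states are the diagonal pairs over SubTreeSet(L1) ∩ SubTreeSet(L2).  The
   weight of (t, t) is SubTreeSeries_L1(t) * SubTreeSeries_L2(t), and the
   summands of KerSeries outside SubTreeSet(L2) vanish. *)

From HB Require Import structures.
From mathcomp Require Import all_boot.

Set Implicit Arguments.
Unset Strict Implicit.
Unset Printing Implicit Defensive.

Section Forall2Seq.
Variables T U : eqType.

Lemma Forall2_size (R : T -> U -> Prop) xs ys :
  List.Forall2 R xs ys -> size xs = size ys.
Proof. by elim=> //= x y xs' ys' _ _ ->. Qed.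

Lemma Forall2_mem_impl (R S : T -> U -> Prop) xs ys :
  (forall x y, x \in xs -> R x y -> S x y) ->
  List.Forall2 R xs ys -> List.Forall2 S xs ys.
Proof.
move=> RS F; elim: F RS => // x y xs' ys' Rxy _ IH RS.
constructor; first by apply: RS; rewrite ?mem_head.
by apply: IH => x' y' x'xs; apply: RS; rewrite inE x'xs orbT.
Qed.

Lemma Forall2_pair (V : Type) (R1 : T -> U -> Prop) (R2 : T -> V -> Prop)
    xs (ps : seq (U * V)) :
  List.Forall2 (fun x p => R1 x p.1 /\ R2 x p.2) xs ps <->
  List.Forall2 R1 xs (unzip1 ps) /\ List.Forall2 R2 xs (unzip2 ps).
Proof.
split; first by elim=> [|x [a b] xs' ps' [R1a R2b] _ [IH1 IH2]]; split; constructor.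
elim: xs ps => [|x xs' IH] [|[a b] ps'] /= [F1 F2]; inversion F1; inversion F2 => //.
by constructor; [split | apply: IH].
Qed.

Lemma Forall2_diag_mem (P : T -> Prop) (R : T -> T -> Prop) xs ys :
  (forall x y, x \in xs -> R x y <-> y = x /\ P x) ->
  List.Forall2 R xs ys <-> ys = xs /\ (forall x, x \in xs -> P x).
Proof.
elim: xs ys => [|x xs' IH] ys RP.
  by split=> [F | [-> _]]; [inversion F | constructor].
have RP' x' y : x' \in xs' -> R x' y <-> y = x' /\ P x'.
  by move=> x'xs; apply: RP; rewrite inE x'xs orbT.
split=> [F | [-> Pxs]].
  inversion F as [|? y ? ys' Rxy Fxs']; subst.
  have [-> Px] := (RP _ _ (mem_head _ _)).1 Rxy.
  have [-> Pxs'] := (IH _ RP').1 Fxs'.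
  by split=> // x'; rewrite inE => /orP[/eqP-> | /Pxs'].
constructor; first by apply/RP; rewrite ?mem_head; split=> //; apply/Pxs/mem_head.
by apply/IH => //; split=> // x' x'xs; apply: Pxs; rewrite inE x'xs orbT.
Qed.

End Forall2Seq.

Section Subtrees.
Variable Sigma : eqType.
Implicit Types (t s c : tree Sigma) (ts : seq (tree Sigma)) (L : seq (tree Sigma)).

Lemma tree_ind_mem (P : tree Sigma -> Prop) :
  (forall f ts, (forall c, c \in ts -> P c) -> P (Node f ts)) -> forall t, P t.
Proof.
move=> IH; elim/tree_ind' => f ts IHts; apply: IH => c.
by elim: ts IHts => //= a ts' IHl IHts; rewrite inE => /orP[/eqP-> | /IHl]; auto.
Qed.

Lemma subtrees_refl t : t \in subtrees t.
Proof. by case: t => f ts; rewrite mem_head. Qed.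

Lemma subtrees_NodeP s f ts :
  reflect (s = Node f ts \/ exists2 c, c \in ts & s \in subtrees c)
          (s \in subtrees (Node f ts)).
Proof.
rewrite /= inE; apply: (iffP orP) => [[/eqP | /flattenP[_ /mapP[c cts ->] sc]] |].
- by left.
- by right; exists c.
case=> [-> | [c cts sc]]; first by left.
by right; apply/flattenP; exists (subtrees c); first exact: map_f.
Qed.

Lemma subtrees_child f ts c : c \in ts -> c \in subtrees (Node f ts).
Proof. by move=> cts; apply/subtrees_NodeP; right; exists c; rewrite ?subtrees_refl. Qed.

Lemma subtrees_trans t s c : s \in subtrees t -> c \in subtrees s -> c \in subtrees t.
Proof.
elim/tree_ind_mem: t s => f ts IH s /subtrees_NodeP[-> // | [u uts su]] cs.
by apply/subtrees_NodeP; right; exists u => //; exact: IH uts _ su cs.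
Qed.

Lemma wf_tree_subtrees ar t s : wf_tree ar t -> s \in subtrees t -> wf_tree ar s.
Proof.
elim/tree_ind_mem: t s => f ts IH s wf_t /subtrees_NodeP[-> // | [c cts sc]].
apply: (IH c cts) sc; move: wf_t => /= /andP[_ /allP]; apply; exact: map_f.
Qed.

Lemma SubTreeSetP L s :
  reflect (exists2 t, t \in L & s \in subtrees t) (s \in SubTreeSet L).
Proof.
rewrite mem_undup; apply: (iffP flattenP) => [[_ /mapP[t tL ->] st] | [t tL st]].
  by exists t.
by exists (subtrees t); first exact: map_f.
Qed.

Lemma SubTreeSet_subtrees L t s :
  t \in SubTreeSet L -> s \in subtrees t -> s \in SubTreeSet L.
Proof.
by case/SubTreeSetP=> u uL tu st; apply/SubTreeSetP; exists u; last exact: subtrees_trans tu st.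
Qed.

Lemma SubTreeSeries_t_notin t s : s \notin subtrees t -> SubTreeSeries_t t s = 0.
Proof.
elim/tree_ind_mem: t => f ts IH s_t /=.
have /negbTE-> : Node f ts != s.
  by apply: contraNneq s_t => <-; apply: subtrees_refl.
have s_ts c : c \in ts -> s \notin subtrees c.
  by move=> cts; apply: contra s_t => sc; apply/subtrees_NodeP; right; exists c.
by rewrite sumnE big_map big1_seq // => c /andP[_ cts]; apply/IH/s_ts.
Qed.

Lemma SubTreeSeries_notin L s : s \notin SubTreeSet L -> SubTreeSeries L s = 0.
Proof.
move=> sL; rewrite /SubTreeSeries big_seq big1 // => t tL.
by apply: SubTreeSeries_t_notin; apply: contra sL => st; apply/SubTreeSetP; exists t.
Qed.

End Subtrees.

Section SubtreeAutomata.
Variables (Sigma : eqType) (ar : Sigma -> nat).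
Implicit Types (t : tree Sigma) (ts : seq (tree Sigma)) (L : seq (tree Sigma)).

Lemma acceptsE (Q : eqType) (A : rwta Sigma Q) f ts q :
  accepts A (Node f ts) q <->
  exists2 qs, List.Forall2 (accepts A) ts qs & trans A f qs q.
Proof.
split=> [acc | [qs F tr]]; last exact: acc_node F tr.
by inversion acc as [? ? qs ? F tr]; exists qs.
Qed.

Lemma accepts_prod (Q1 Q2 : eqType) (A1 : rwta Sigma Q1) (A2 : rwta Sigma Q2)
    t q1 q2 :
  accepts (prod_rwta A1 A2) t (q1, q2) <-> accepts A1 t q1 /\ accepts A2 t q2.
Proof.
elim/tree_ind_mem: t q1 q2 => f ts IH q1 q2; rewrite !acceptsE.
have children qs : List.Forall2 (accepts (prod_rwta A1 A2)) ts qs <->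
    List.Forall2 (accepts A1) ts (unzip1 qs) /\
    List.Forall2 (accepts A2) ts (unzip2 qs).
  by rewrite -Forall2_pair; split; apply: Forall2_mem_impl => c [a b] cts /(IH c cts a b).
split=> [[qs /children[F1 F2] /andP[tr1 tr2]] | [[qs1 F1 tr1] [qs2 F2 tr2]]].
  by split; [exists (unzip1 qs) | exists (unzip2 qs)].
have size_qs : size qs1 = size qs2 by rewrite -(Forall2_size F1) (Forall2_size F2).
exists (zip qs1 qs2); last by rewrite /= unzip1_zip ?unzip2_zip ?size_qs ?tr1.
by apply/children; rewrite unzip1_zip ?unzip2_zip ?size_qs.
Qed.

Lemma accepts_subtree_automaton L t q :
  accepts (subtree_automaton ar L) t q <->
  [/\ q = t, wf_tree ar t & t \in SubTreeSet L].
Proof.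
elim/tree_ind_mem: t q => f ts IH q; rewrite acceptsE.
have children qs : List.Forall2 (accepts (subtree_automaton ar L)) ts qs <->
    qs = ts /\ (forall c, c \in ts -> wf_tree ar c /\ c \in SubTreeSet L).
  apply: Forall2_diag_mem => c q' cts.
  by split=> [/(IH c cts)[-> ? ?] | [-> [? ?]]]; last apply/(IH c cts).
have sub_L c : c \in ts -> Node f ts \in SubTreeSet L -> c \in SubTreeSet L.
  by move=> cts tL; apply: SubTreeSet_subtrees tL (subtrees_child f cts).
split=> [[qs /children[-> ch] /and4P[/eqP-> tL _ size_ts]] | [-> wf_t tL]].
  split=> //=; rewrite size_ts; apply/allP => _ /mapP[c cts ->]; exact: (ch c cts).1.
have /andP[size_ts _] := wf_t.
exists ts; last by rewrite /= eqxx tL size_ts andbT; apply/allP => c /sub_L; apply.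
apply/children; split=> // c cts; split; last exact: sub_L.
exact: wf_tree_subtrees wf_t (subtrees_child f cts).
Qed.

Lemma accessible_prod_subtree_automaton L1 L2 t1 t2 :
  all (wf_tree ar) L1 ->
  accessible_state ar
    (prod_rwta (subtree_automaton ar L1) (subtree_automaton ar L2)) (t1, t2) <->
  [/\ t1 = t2, t1 \in SubTreeSet L1 & t2 \in SubTreeSet L2].
Proof.
move=> wf_L1; split=> [[t [_ /accepts_prod[]]] | [<- tL1 tL2]].
  by do 2![case/accepts_subtree_automaton=> -> _ ?].
have wf_t1 : wf_tree ar t1.
  by case/SubTreeSetP: tL1 => u uL1; apply: wf_tree_subtrees; apply: (allP wf_L1).
by exists t1; split=> //; apply/accepts_prod; split; apply/accepts_subtree_automaton.
Qed.

End SubtreeAutomata.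

Theorem theorem2 (Sigma : finType) (ar : Sigma -> nat)
  (L1 L2 : seq (tree Sigma)) :
  uniq L1 -> uniq L2 ->
  all (wf_tree ar) L1 -> all (wf_tree ar) L2 ->
  forall B : rwta Sigma (tree Sigma * tree Sigma)%type,
    is_accessible_part ar
      (prod_rwta (subtree_automaton ar L1) (subtree_automaton ar L2)) B ->
    KerSeries L1 L2 = \sum_(q <- states B) weight B q.
Proof.
move=> _ _ wf_L1 _ B [uniq_B mem_B weight_B _].
have diag_inj : injective (fun t : tree Sigma => (t, t)) by move=> t u [].
have states_B : perm_eq (states B)
    [seq (t, t) | t <- SubTreeSet L1 & t \in SubTreeSet L2].
  apply: uniq_perm => //; first by rewrite map_inj_uniq ?filter_uniq ?undup_uniq.
  case=> t1 t2; apply/idP/idP.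
    case/mem_B=> _ /accessible_prod_subtree_automaton[// | <- tL1 tL2].
    by rewrite (mem_map diag_inj) mem_filter tL1 tL2.
  case/mapP=> t; rewrite mem_filter => /andP[tL2 tL1] [-> ->].
  apply/mem_B; split; first exact: allpairs_f.
  exact/accessible_prod_subtree_automaton.
rewrite (perm_big _ states_B) big_map big_filter big_mkcond.
apply: eq_bigr => t _; rewrite weight_B /=.
by case: ifPn => // /SubTreeSeries_notin ->; rewrite muln0.
Qed.
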